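(* If $(\Sigma, *, \mathsf{emp})$ is a separation algebra, then $(\Sigma^+, *, \Sigma^*.\mathsf{emp})$ is a separation algebra, where for $\sigma.s, \tau.t\in\Sigma^+$ the product $\sigma.s * \tau.t$ is defined iff $\sigma=\tau$ and $s * t$ is defined, in which case $\sigma.s*\tau.t=\sigma.(s*t)$.
   Context: A separation algebra $(\Sigma,*,\mathsf{emp})$ is a partial commutative monoid with a set of units $\mathsf{emp}\subseteq\Sigma$ such that (i) every $s\in\Sigma$ has a unit $1\in\mathsf{emp}$ with $s*1=s$, and (ii) $1*1'$ is undefined for any two distinct units $1,1'\in\mathsf{emp}$. $\Sigma^+$ denotes nonempty finite sequences over $\Sigma$, $\Sigma^*$ all finite sequences, and $\sigma.s$ denotes the sequence $\sigma$ followed by $s$. *)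

From Stdlib Require Import List ClassicalEpsilon.
Import ListNotations.

(* A partial binary operation on S: None = undefined. *)
Definition pop (S : Type) := S -> S -> option S.

Definition pbind {S : Type} (o : option S) (f : S -> option S) : option S :=
  match o with Some x => f x | None => None end.

(* Partial commutative monoid (partial operation, Kleene-equality laws):
   a*b ~ b*a, and (a*b)*c ~ a*(b*c) (one side defined iff the other is, and
   then equal). *)
Definition partial_comm_assoc {S : Type} (op : pop S) : Prop :=
  (forall a b, op a b = op b a) /\
  (forall a b c, pbind (op a b) (fun ab => op ab c) =
                 pbind (op b c) (fun bc => op a bc)).

Definition sep_alg {S : Type} (op : pop S) (emp : S -> Prop) : Prop :=
  partial_comm_assoc op /\
  (forall s, exists u, emp u /\ op s u = Some s) /\
  (forall u u', emp u -> emp u' -> u <> u' -> op u u' = None).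

(* Nonempty sequences Sigma^+ : the pair (sigma, s) encodes sigma.s,
   with sigma : Sigma^* a (possibly empty) list. *)
Definition nseq (S : Type) : Type := (list S * S)%type.

Definition nseq_op {S : Type} (op : pop S) : pop (nseq S) :=
  fun x y =>
    if excluded_middle_informative (fst x = fst y) then
      match op (snd x) (snd y) with
      | Some r => Some (fst x, r)
      | None => None
      end
    else None.

Definition nseq_emp {S : Type} (emp : S -> Prop) : nseq S -> Prop :=
  fun x => emp (snd x).

(* The product on nonempty sequences is the product of the discrete partial
   commutative monoid on prefixes (defined only on equal arguments) with the
   given one on last letters, so each separation-algebra law reduces to the
   same law in the last letter, read at a common prefix. *)

From Stdlib Require Import ClassicalEpsilon.

Section NseqOp.

Variables (S : Type) (op : pop S).

Lemma nseq_op_eq (sigma : list S) (s t : S) :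
  nseq_op op (sigma, s) (sigma, t) = option_map (pair sigma) (op s t).
Proof.
  unfold nseq_op; simpl.
  destruct (excluded_middle_informative (sigma = sigma)) as [_ | neq];
    [| contradiction neq; reflexivity].
  destruct (op s t); reflexivity.
Qed.

Lemma nseq_op_neq (sigma tau : list S) (s t : S) :
  sigma <> tau -> nseq_op op (sigma, s) (tau, t) = None.
Proof.
  intros neq; unfold nseq_op; simpl.
  destruct (excluded_middle_informative (sigma = tau)); [contradiction | reflexivity].
Qed.

Lemma nseq_opC :
  (forall a b, op a b = op b a) ->
  forall x y, nseq_op op x y = nseq_op op y x.
Proof.
  intros opC [sigma s] [tau t].
  destruct (excluded_middle_informative (sigma = tau)) as [<- | neq].
  - rewrite !nseq_op_eq, opC; reflexivity.
  - rewrite !nseq_op_neq; auto.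
Qed.

Lemma nseq_opA :
  (forall a b c, pbind (op a b) (fun ab => op ab c) =
                 pbind (op b c) (fun bc => op a bc)) ->
  forall x y z, pbind (nseq_op op x y) (fun xy => nseq_op op xy z) =
                pbind (nseq_op op y z) (fun yz => nseq_op op x yz).
Proof.
  intros opA [sigma s] [tau t] [rho w].
  destruct (excluded_middle_informative (sigma = tau)) as [<- | neq_st].
  - destruct (excluded_middle_informative (sigma = rho)) as [<- | neq_sr].
    + rewrite !nseq_op_eq.
      transitivity (option_map (pair sigma) (pbind (op s t) (fun st => op st w))).
      { destruct (op s t); simpl; [apply nseq_op_eq | reflexivity]. }
      rewrite opA.
      destruct (op t w); simpl; [symmetry; apply nseq_op_eq | reflexivity].
    + rewrite nseq_op_eq, (nseq_op_neq _ _ _ _ neq_sr).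
      destruct (op s t); simpl; [apply nseq_op_neq |]; auto.
  - rewrite (nseq_op_neq _ _ _ _ neq_st).
    destruct (excluded_middle_informative (tau = rho)) as [<- | neq_tr].
    + rewrite nseq_op_eq.
      destruct (op t w); simpl; [symmetry; apply nseq_op_neq |]; auto.
    + rewrite (nseq_op_neq _ _ _ _ neq_tr); reflexivity.
Qed.

Variable emp : S -> Prop.

Lemma nseq_op_unit :
  (forall s, exists u, emp u /\ op s u = Some s) ->
  forall x, exists v, nseq_emp emp v /\ nseq_op op x v = Some x.
Proof.
  intros has_unit [sigma s].
  destruct (has_unit s) as [u [emp_u su]].
  exists (sigma, u); split; [exact emp_u |].
  rewrite nseq_op_eq, su; reflexivity.
Qed.

Lemma nseq_op_units_undef :
  (forall u u', emp u -> emp u' -> u <> u' -> op u u' = None) ->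
  forall v v', nseq_emp emp v -> nseq_emp emp v' -> v <> v' ->
  nseq_op op v v' = None.
Proof.
  intros units_undef [sigma u] [tau u'] emp_u emp_u' neq.
  destruct (excluded_middle_informative (sigma = tau)) as [<- | neq_st].
  - rewrite nseq_op_eq, units_undef; auto.
    intros <-; contradiction neq; reflexivity.
  - apply nseq_op_neq; exact neq_st.
Qed.

End NseqOp.

Theorem lemma3p1 (S : Type) (op : pop S) (emp : S -> Prop) :
  sep_alg op emp -> sep_alg (nseq_op op) (nseq_emp emp).
Proof.
  intros [[opC opA] [has_unit units_undef]].
  split; [split | split].
  - apply nseq_opC; exact opC.
  - apply nseq_opA; exact opA.
  - apply nseq_op_unit; exact has_unit.
  - apply nseq_op_units_undef; exact units_undef.
Qed.
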